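(* Let $k\ge1$, $s=2k+1$, and let $f:[-k,k]^2\to[n]^2$ be injective with number of tiles $|T(f)|=t+1\ge2$. Then $$\gamma(f)\ge t\Big(2-\frac{2}{s}\Big).$$ Moreover, if two tiles of $f$ have more than $35$ elements each, then $$\gamma(f)\ge 2t\Big(1-\frac1s\Big)+4.$$
   Context: Every vertex $x\in[n]^2$ has four incident edges $\uparrow(x),\downarrow(x),\rightarrow(x),\leftarrow(x)$, where $\rightarrow(i,j)=\leftarrow(i+1,j)$ is the edge between $(i,j)$ and $(i+1,j)$ and $\uparrow(i,j)=\downarrow(i,j+1)$ the edge between $(i,j)$ and $(i,j+1)$; for boundary vertices the edges leading out of $[n]^2$ are included. The tiles $T(f)$ of $f$ are the connected components of the graph on $f([-k,k]^2)$ in which $a,b$ are adjacent iff $a-b\in\{\pm(0,1),\pm(1,0)\}$. The constraint graph $G(f)=(V,E)$ is the multigraph whose vertices are grid edges and whose edge multiset consists of the pair $(\rightarrow(f(u)),\leftarrow(f(u+(1,0))))$ for each $u$ with $u,u+(1,0)\in[-k,k]^2$ and $f(u+(1,0))\neq f(u)+(1,0)$, and the pair $(\uparrow(f(u)),\downarrow(f(u+(0,1))))$ for each $u$ with $u,u+(0,1)\in[-k,k]^2$ and $f(u+(0,1))\ne f(u)+(0,1)$; $V$ is the set of grid edges appearing in some pair. $\gamma(f)=|V|-(\text{number of connected components of }G(f))$. *)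

From mathcomp Require Import all_boot all_order all_algebra.
Set Implicit Arguments. Unset Strict Implicit. Unset Printing Implicit Defensive.

(* Conventions:
   - [n] is represented by 'I_n = {0,..,n-1} (a translate of {1,..,n}).
   - [-k,k] is represented by 'I_(2k+1), coordinate a standing for a - k.
   - A grid edge is encoded as (b, a, c) : bool * 'I_(n+1) * 'I_(n+1):
       (false, a, c) = horizontal edge between (a-1, c) and (a, c)  (a in 0..n)
       (true,  c, a) = vertical   edge between (c, a-1) and (c, a)  (a in 0..n)
     so boundary edges leading out of [n]^2 are included. *)

Definition pt (n : nat) := ('I_n * 'I_n)%type.
Definition gedge (n : nat) := (bool * 'I_n.+1 * 'I_n.+1)%type.
Definition dom (k : nat) := ('I_(2 * k + 1) * 'I_(2 * k + 1))%type.

Definition wid n (i : 'I_n) : 'I_n.+1 := widen_ord (leqnSn n) i.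
Definition sc n (i : 'I_n) : 'I_n.+1 := lift ord0 i.

(* right(i,j) = edge {(i,j),(i+1,j)},  left(i,j) = edge {(i-1,j),(i,j)} *)
Definition eright n (x : pt n) : gedge n := (false, sc x.1, wid x.2).
Definition eleft  n (x : pt n) : gedge n := (false, wid x.1, wid x.2).
(* up(i,j) = edge {(i,j),(i,j+1)},  down(i,j) = edge {(i,j-1),(i,j)} *)
Definition eup    n (x : pt n) : gedge n := (true, wid x.1, sc x.2).
Definition edown  n (x : pt n) : gedge n := (true, wid x.1, wid x.2).

Section Constraint.
Variables (k n : nat) (f : dom k -> pt n).

Definition hconstr (x y : gedge n) : bool :=
  [exists u : dom k, exists v : dom k,
     [&& (v.1 == u.1.+1 :> nat), (v.2 == u.2),
         ~~ (((f v).1 == (f u).1.+1 :> nat) && ((f v).2 == (f u).2)),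
         x == eright (f u) & y == eleft (f v)]].

Definition vconstr (x y : gedge n) : bool :=
  [exists u : dom k, exists v : dom k,
     [&& (v.1 == u.1), (v.2 == u.2.+1 :> nat),
         ~~ (((f v).1 == (f u).1) && ((f v).2 == (f u).2.+1 :> nat)),
         x == eup (f u) & y == edown (f v)]].

Definition Gadj (x y : gedge n) : bool :=
  [|| hconstr x y, hconstr y x, vconstr x y | vconstr y x].

Definition Gverts : {set gedge n} := [set x | [exists y, Gadj x y]].

Definition Gcomps : {set {set gedge n}} :=
  [set [set y in Gverts | connect Gadj x y] | x in Gverts].

Definition gamma : nat := #|Gverts| - #|Gcomps|.

Definition img : {set pt n} := [set f u | u : dom k].

Definition gridadj (p q : pt n) : bool :=
  [|| ((p.1 : nat) == q.1.+1) && (p.2 == q.2),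
      ((q.1 : nat) == p.1.+1) && (p.2 == q.2),
      ((p.2 : nat) == q.2.+1) && (p.1 == q.1) |
      ((q.2 : nat) == p.2.+1) && (p.1 == q.1)].

Definition imgadj (p q : pt n) : bool :=
  [&& p \in img, q \in img & gridadj p q].

Definition tiles : {set {set pt n}} :=
  [set [set q in img | connect imgadj p q] | p in img].

End Constraint.

(* In direction d, call a domain point a start if its d-predecessor is missing
   or is not mapped to the d-predecessor of its image, and an image point a
   start if its d-predecessor is not in the image.  Every domain start off the
   first line comes from a broken adjacency, whose two grid edges are vertices
   of G(f); matching these edges against the image starts shows that G(f) has
   at least #(domain starts) + #(image starts) - 2s vertices of direction d.
   Every line meeting f^-1(T), resp. a tile T, meets it in a start, and the
   numbers x of such lines in the two directions (the image one capped at 2s)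
   satisfy 4|T| <= x^2 <= 4s^2, whence x(s + 1) >= 2|T| + 2s.  Components of
   G(f) have at least two vertices, so gamma >= #V/2, and summing over the
   t + 1 tiles with sum |T| = s^2 gives gamma(s + 1) >= 2st, which is stronger
   than the first claim.  Tiles of area at least 36 have x >= 12, and two of
   them gain another 4(s + 1). *)

From mathcomp Require Import all_boot all_order all_algebra.
From mathcomp Require Import zify ring.
Import GRing.Theory Num.Theory.
Set Implicit Arguments. Unset Strict Implicit. Unset Printing Implicit Defensive.

(* The constraints on the semiperimeter x of a box of sides at most s
   containing m points. *)
Definition feasible_semiperimeter (s m x : nat) : bool :=
  [&& 2 <= x, x <= 2 * s & 4 * m <= x * x].

Lemma feasible_semiperimeter_addn s m a b :
  0 < m -> m <= a * b -> a <= s -> b <= s -> feasible_semiperimeter s m (a + b).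
Proof.
move=> m_gt0 m_le a_le b_le.
have /andP[a_gt0 b_gt0] : (0 < a) && (0 < b) by rewrite -muln_gt0; lia.
have agm : 4 * (a * b) <= (a + b) * (a + b) by rewrite mulnn; exact: nat_AGM2.
apply/and3P; split; lia.
Qed.

Lemma feasible_semiperimeter_minn s m a b :
  0 < m -> m <= a * b -> m <= s * s ->
  feasible_semiperimeter s m (minn (a + b) (2 * s)).
Proof.
move=> m_gt0 m_le m_sq.
have /andP[a_gt0 b_gt0] : (0 < a) && (0 < b) by rewrite -muln_gt0; lia.
have agm : 4 * (a * b) <= (a + b) * (a + b) by rewrite mulnn; exact: nat_AGM2.
have sq : 4 * m <= (2 * s) * (2 * s) by rewrite mulnACA leq_mul.
have s_gt0 : 0 < s by case: (posnP s) m_sq => [->|]; lia.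
apply/and3P.
by case: (leqP (a + b) (2 * s)) => ab_s; split; lia.
Qed.

(* x (s + 1) - x ^ 2 / 2 - 2 s = (x - 2) (2 s - x) / 2 vanishes at both ends
   of the range [2, 2 s]. *)
Lemma feasible_semiperimeter_bound s m x :
  feasible_semiperimeter s m x -> 2 * m + 2 * s <= x * (s + 1).
Proof. by case/and3P => *; nia. Qed.

Lemma feasible_semiperimeter_pair_bound s m1 m2 x1 x2 :
  feasible_semiperimeter s m1 x1 -> feasible_semiperimeter s m2 x2 ->
  35 < m1 -> 35 < m2 -> m1 + m2 <= s * s ->
  2 * m1 + 2 * s + (2 * m2 + 2 * s) + 4 * (s + 1) <= x1 * (s + 1) + x2 * (s + 1).
Proof.
move=> /and3P[_ x1_le sq1] /and3P[_ x2_le sq2] big1 big2 area.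
have s_gt8 : 8 < s by rewrite -ltn_sqr -!mulnn; lia.
have x1_ge12 : 12 <= x1 by rewrite -leq_sqr -!mulnn; lia.
have x2_ge12 : 12 <= x2 by rewrite -leq_sqr -!mulnn; lia.
rewrite -mulnDl; case: (leqP (2 * s + 8) (x1 + x2)) => sum_x.
  have : (2 * s + 8) * (s + 1) <= (x1 + x2) * (s + 1) by rewrite leq_mul2r sum_x orbT.
  lia.
(* Here x_i + 5 <= 2 s, and (2 s - x_i - 5) (x_i - 12) >= 0 sharpens 4 m_i <= x_i ^ 2. *)
have sharp1 : x1 * x1 + 24 * s <= 2 * s * x1 + 7 * x1 + 60 by nia.
have sharp2 : x2 * x2 + 24 * s <= 2 * s * x2 + 7 * x2 + 60 by nia.
lia.
Qed.

Lemma nat_le_rat_bound (s t g c : nat) : 0 < s ->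
  2 * s * t + c * (s + 1) <= g * (s + 1) ->
  ((2 * t)%:R * (1 - 1 / s%:R) + c%:R <= g%:R :> rat)%R.
Proof.
move=> s_gt0 le_g.
have {}le_g : 2 * t * s + c * s <= g * s + 2 * t by nia.
have s_pos : (0 < s%:R :> rat)%R by rewrite ltr0n.
rewrite -(ler_pM2r s_pos).
have -> : (((2 * t)%:R * (1 - 1 / s%:R) + c%:R) * s%:R
           = (2 * t * s + c * s)%:R - (2 * t)%:R :> rat)%R.
  by rewrite !natrD !natrM; field; rewrite pnatr_eq0 -lt0n.
by rewrite lerBlDr -!natrM -natrD ler_nat.
Qed.

Lemma leq_sum_two (I : finType) (P : {set I}) (F G : I -> nat) i j c :
  i \in P -> j \in P -> i != j -> {in P, forall x, G x <= F x} ->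
  G i + G j + c <= F i + F j -> \sum_(x in P) G x + c <= \sum_(x in P) F x.
Proof.
move=> iP jP ij GF Gij.
have jPi : (j \in P) && (j != i) by rewrite jP eq_sym.
rewrite !(bigD1 i iP) !(bigD1 j jPi) /=.
set SG := \sum_(x | _) G x; set SF := \sum_(x | _) F x.
have : SG <= SF by apply: leq_sum => x /andP[/andP[/GF]].
lia.
Qed.

(* Direction [false] is horizontal and [true] vertical; [dsucc d v u] says
   that v = u + e_d. *)
Definition along (d : bool) m (u : 'I_m * 'I_m) : 'I_m := if d then u.2 else u.1.
Definition across (d : bool) m (u : 'I_m * 'I_m) : 'I_m := if d then u.1 else u.2.

Definition dsucc (d : bool) m (v u : 'I_m * 'I_m) : bool :=
  ((along d v : nat) == (along d u).+1) && (across d v == across d u).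

Lemma along_across_inj d m (u v : 'I_m * 'I_m) :
  along d u = along d v -> across d u = across d v -> u = v.
Proof. by case: d; case: u => a b; case: v => c e /= -> ->. Qed.

Lemma dsucc_uniq d m (u v w : 'I_m * 'I_m) : dsucc d v u -> dsucc d w u -> v = w.
Proof.
move=> /andP[/eqP vu /eqP vu'] /andP[/eqP wu /eqP wu'].
by apply: (along_across_inj (d := d)); [apply: val_inj => /=; lia | rewrite vu' wu'].
Qed.

Lemma dpred_exists d m (v : 'I_m * 'I_m) : 0 < along d v -> exists u, dsucc d v u.
Proof.
move=> v_pos; have lt_m : (along d v).-1 < m by have := ltn_ord (along d v); lia.
case: d v_pos lt_m => /= v_pos lt_m;
  [exists (v.1, Ordinal lt_m) | exists (Ordinal lt_m, v.2)];
by rewrite /dsucc /= eqxx andbT; apply/eqP; lia.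
Qed.

Lemma gridadj_sym n : symmetric (@gridadj n).
Proof.
move=> p q; rewrite /gridadj.
by apply/idP/idP => /or4P[] /andP[/eqP -> /eqP ->]; rewrite ?eqxx ?andbT ?orbT.
Qed.

Lemma dsucc_gridadj d n (p q : pt n) : dsucc d q p -> gridadj p q.
Proof.
by case: d; rewrite /dsucc /gridadj /= => /andP[-> /eqP ->]; rewrite eqxx ?orbT.
Qed.

Definition eout (d : bool) n (p : pt n) : gedge n := if d then eup p else eright p.
Definition ein (d : bool) n (p : pt n) : gedge n := if d then edown p else eleft p.

Lemma eout_dir d n (p : pt n) : (eout d p).1.1 = d.
Proof. by case: d. Qed.

Lemma ein_dir d n (p : pt n) : (ein d p).1.1 = d.
Proof. by case: d. Qed.

Lemma eout_inj d n : injective (@eout d n).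
Proof.
by case: d => -[a b] [c e]; rewrite /eout /eup /eright => /eqP;
  rewrite !xpair_eqE -!val_eqE /= /bump /= => /andP[/eqP ? /eqP ?];
  congr (_, _); apply: val_inj => /=; lia.
Qed.

Lemma ein_inj d n : injective (@ein d n).
Proof.
by case: d => -[a b] [c e]; rewrite /ein /edown /eleft => /eqP;
  rewrite !xpair_eqE -!val_eqE /= /bump /= => /andP[/eqP ? /eqP ?];
  congr (_, _); apply: val_inj => /=; lia.
Qed.

Lemma eout_eq_ein d n (p q : pt n) : (eout d p == ein d q) = dsucc d q p.
Proof.
case: d; rewrite /eout /ein /eup /edown /eright /eleft /dsucc /along /across;
by rewrite !xpair_eqE -!val_eqE /= /bump /=;
  apply/andP/andP => -[/eqP h1 /eqP h2]; split; apply/eqP; lia.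
Qed.

Lemma connect_equivalence_partition (T : finType) (e : rel T) (D : {set T}) :
  connect_sym e -> partition (equivalence_partition (connect e) D) D.
Proof.
move=> e_sym; apply: equivalence_partitionP => x y z _ _ _.
by split=> [|xy]; [exact: connect0 | apply/idP/idP; apply: connect_trans; rewrite // e_sym].
Qed.

(* Every component of a graph without isolated vertices has two vertices. *)
Lemma double_card_components_le (T : finType) (e : rel T) :
  symmetric e -> irreflexive e ->
  2 * #|equivalence_partition (connect e) [set x | [exists y, e x y]]|
    <= #|[set x | [exists y, e x y]]|.
Proof.
move=> e_sym e_irr; set V := [set x | _].
have partV := connect_equivalence_partition V (sym_connect_sym e_sym).
rewrite (card_partition partV) mulnC -sum_nat_const.
apply: leq_sum => C /imsetP[x xV ->].
move: (xV); rewrite inE => /existsP[y xy].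
have yV : y \in V by rewrite inE; apply/existsP; exists x; rewrite e_sym.
have x_ne_y : x != y by apply: contraTneq xy => ->; rewrite e_irr.
rewrite (cardsD1 x) inE xV connect0 add1n ltnS card_gt0.
apply/set0Pn; exists y; rewrite in_setD1 eq_sym x_ne_y.
by rewrite [y \in _]inE yV connect1.
Qed.

Lemma sum_card_preimset_partition (T X : finType) (P : {set {set T}})
    (D : {set T}) (A : {set X}) (g : X -> T) :
  partition P D -> {in A, forall x, g x \in D} ->
  \sum_(B in P) #|A :&: g @^-1: B| = #|A|.
Proof.
move=> /and3P[/eqP coverP trivP _] gA.
have cardE (B : {set T}) : #|A :&: g @^-1: B| = \sum_(x in A) (g x \in B).
  rewrite -sum1_card big_mkcond [RHS]big_mkcond.
  by apply: eq_bigr => x _; rewrite !inE; case: (x \in A); case: (g x \in B).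
rewrite (eq_bigr _ (fun B _ => cardE B)) exchange_big /= -sum1_card.
apply: eq_bigr => x /gA; rewrite -coverP => /bigcupP[B0 B0P gxB0].
rewrite (bigD1 B0) //= gxB0 big1 // => B /andP[BP B_ne].
by rewrite (disjointFl (trivIsetP trivP _ _ BP B0P B_ne) gxB0).
Qed.

Lemma card_le_mul_imset_fst_snd (T1 T2 : finType) (A : {set T1 * T2}) :
  #|A| <= #|[set u.1 | u in A]| * #|[set u.2 | u in A]|.
Proof.
rewrite -cardsX; apply: subset_leq_card; apply/subsetP => u uA.
by rewrite inE; apply/andP; split; apply: imset_f.
Qed.

(* Walking backwards along a line inside S ends at a point of Z. *)
Lemma card_across_le_starts m d (S Z : {set 'I_m * 'I_m}) :
  {in S, forall p, p \notin Z -> exists2 q, dsucc d p q & q \in S} ->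
  #|[set across d p | p in S]| <= #|S :&: Z|.
Proof.
move=> backS.
have reach a p : along d p <= a -> p \in S ->
    exists2 p', p' \in S :&: Z & across d p' = across d p.
  elim: a p => [|a IH] p p_le pS; have [pZ | pZ] := boolP (p \in Z);
    try by exists p; rewrite // inE pS.
  - by have [q /andP[/eqP qp _] _] := backS p pS pZ; lia.
  - have [q /andP[/eqP qp /eqP ->] qS] := backS p pS pZ.
    by apply: IH qS; lia.
apply: leq_trans (leq_imset_card (@across d m) _).
apply: subset_leq_card; apply/subsetP => _ /imsetP[p pS ->].
have [p' p'SZ <-] := reach _ p (leqnn _) pS.
exact: imset_f.
Qed.

Section Tiles.

Variables (k n : nat) (f : dom k -> pt n).
Hypothesis f_inj : injective f.
Local Notation s := (2 * k + 1).

Definition constr (d : bool) (x y : gedge n) : bool :=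
  if d then vconstr f x y else hconstr f x y.

Definition broken (d : bool) (u v : dom k) : bool :=
  dsucc d v u && ~~ dsucc d (f v) (f u).

Lemma constrP d x y :
  reflect (exists u v, [/\ broken d u v, x = eout d (f u) & y = ein d (f v)])
          (constr d x y).
Proof.
case: d; rewrite /constr /vconstr /hconstr /broken /dsucc /along /across /eout /ein /=.
  apply: (iffP existsP) =>
    [[u /existsP[v /and5P[vu1 vu2 nsucc /eqP -> /eqP ->]]]
    | [u [v [/andP[/andP[vu1 vu2] nsucc] -> ->]]]].
    by exists u, v; rewrite vu1 vu2 [X in ~~ X]andbC.
  by exists u; apply/existsP; exists v; rewrite vu1 vu2 [X in ~~ X]andbC nsucc !eqxx.
apply: (iffP existsP) =>
  [[u /existsP[v /and5P[vu1 vu2 nsucc /eqP -> /eqP ->]]]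
  | [u [v [/andP[/andP[vu1 vu2] nsucc] -> ->]]]].
  by exists u, v; rewrite vu1 vu2.
by exists u; apply/existsP; exists v; rewrite vu1 vu2 nsucc !eqxx.
Qed.

Lemma constr_irr d x : constr d x x = false.
Proof.
apply/negP => /constrP[u [v [/andP[_ not_succ] xu xv]]].
by move: not_succ; rewrite -eout_eq_ein -xu -xv eqxx.
Qed.

Lemma GadjE x y : Gadj f x y =
  [|| constr false x y, constr false y x, constr true x y | constr true y x].
Proof. by []. Qed.

Lemma Gadj_sym : symmetric (Gadj f).
Proof. by move=> x y; rewrite !GadjE; apply/idP/idP => /or4P[] ->; rewrite ?orbT. Qed.

Lemma Gadj_irr : irreflexive (Gadj f).
Proof. by move=> x; rewrite GadjE !constr_irr. Qed.

Lemma card_Gverts_le_double_gamma : #|Gverts f| <= 2 * gamma f.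
Proof.
have : 2 * #|Gcomps f| <= #|Gverts f| := double_card_components_le Gadj_sym Gadj_irr.
by rewrite /gamma; lia.
Qed.

Definition dverts (d : bool) : {set gedge n} :=
  [set x | [exists y, constr d x y || constr d y x]].

Lemma dverts_dir d x : x \in dverts d -> x.1.1 = d.
Proof.
rewrite inE => /existsP[y /orP[] /constrP[u [v [_ eu ev]]]];
by rewrite ?eu ?ev ?eout_dir ?ein_dir.
Qed.

Lemma card_dverts : #|dverts false| + #|dverts true| <= #|Gverts f|.
Proof.
rewrite -cardsUI.
have -> : dverts false :&: dverts true = set0.
  apply/setP => x; rewrite in_setI in_set0; apply/negP => /andP[x0 x1].
  by have := dverts_dir x0; rewrite (dverts_dir x1).
rewrite cards0 addn0; apply: subset_leq_card; rewrite subUset.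
by apply/andP; split; apply/subsetP => x; rewrite !inE => /existsP[y xy];
  apply/existsP; exists y; rewrite GadjE; case/orP: xy => ->; rewrite ?orbT.
Qed.

Definition broken_heads d := [set v : dom k | [exists u, broken d u v]].
Definition broken_tails d := [set u : dom k | [exists v, broken d u v]].
Definition head_edges d := [set ein d (f v) | v in broken_heads d].
Definition tail_edges d := [set eout d (f u) | u in broken_tails d].

(* Starts of the maximal d-runs on which f is a translation, resp. of the
   maximal d-runs of image points. *)
Definition dom_starts d :=
  [set v : dom k | ((along d v : nat) == 0) || (v \in broken_heads d)].
Definition img_starts d :=
  [set p in img f | [forall q in img f, ~~ dsucc d p q]].

Lemma card_heads_le_tails d : #|broken_heads d| <= #|broken_tails d|.
Proof.
pose next u := odflt u [pick v | broken d u v].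
apply: leq_trans (leq_imset_card next (broken_tails d)).
apply: subset_leq_card; apply/subsetP => v; rewrite inE => /existsP[u uv].
apply/imsetP; exists u; first by rewrite inE; apply/existsP; exists v.
rewrite /next; case: pickP => [w uw | /(_ v)]; last by rewrite uv.
exact: dsucc_uniq (andP uv).1 (andP uw).1.
Qed.

Lemma card_dom_starts d : #|dom_starts d| <= s + #|broken_heads d|.
Proof.
pose first_line := [set v : dom k | (along d v : nat) == 0].
have card_first : #|first_line| <= s.
  rewrite -(card_in_imset (f := @across d _)); last first.
    move=> u v; rewrite !inE => /eqP u0 /eqP v0.
    by apply: along_across_inj; apply: val_inj; rewrite /= u0 v0.
  by apply: leq_trans (max_card _) _; rewrite card_ord.
apply: leq_trans (leq_add card_first (leqnn _)).
apply: leq_trans (leq_card_setU _ _); apply: subset_leq_card.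
by apply/subsetP => v; rewrite !inE.
Qed.

Lemma card_dverts_ge d :
  #|broken_heads d| + #|broken_tails d|
    <= #|dverts d| + #|head_edges d :&: tail_edges d|.
Proof.
rewrite -(card_imset _ (fun u v => @f_inj u v \o @ein_inj d n _ _)).
rewrite -(card_imset _ (fun u v => @f_inj u v \o @eout_inj d n _ _)).
rewrite -cardsUI leq_add2r; apply: subset_leq_card; rewrite subUset.
apply/andP; split; apply/subsetP => x /imsetP[v]; rewrite inE => /existsP[u uv] ->;
  rewrite inE; apply/existsP.
  by exists (eout d (f u)); apply/orP; right; apply/constrP; exists u, v.
by exists (ein d (f u)); apply/orP; left; apply/constrP; exists v, u.
Qed.

(* Preimages of image starts, and broken heads whose in-edge is also the
   out-edge of a broken tail, are disjoint sets of domain starts. *)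
Lemma card_img_starts_le d :
  #|img_starts d| + #|head_edges d :&: tail_edges d| <= #|dom_starts d|.
Proof.
pose X := f @^-1: img_starts d.
pose Y := [set v in broken_heads d | ein d (f v) \in tail_edges d].
have card_img : #|img_starts d| <= #|X|.
  apply: leq_trans (leq_imset_card f X); apply: subset_leq_card.
  apply/subsetP => p p_start; move: (p_start); rewrite inE => /andP[/imsetP[v _ pv] _].
  by rewrite pv imset_f // inE -pv.
have card_joint : #|head_edges d :&: tail_edges d| <= #|Y|.
  apply: leq_trans (leq_imset_card (fun v => ein d (f v)) Y); apply: subset_leq_card.
  apply/subsetP => x; rewrite inE => /andP[/imsetP[v hv ->] tx].
  by apply: imset_f; rewrite inE hv tx.
have XY0 : X :&: Y = set0.
  apply/setP => v; rewrite !inE; apply/negP.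
  case/andP => /andP[_ /forall_inP no_pred] /andP[_ /imsetP[u _]].
  move/eqP; rewrite eq_sym eout_eq_ein; apply/negP.
  by apply: no_pred; rewrite imset_f.
have XY_starts : X :|: Y \subset dom_starts d.
  rewrite subUset; apply/andP; split; apply/subsetP => v; rewrite !inE; last first.
    by case/andP => ->; rewrite orbT.
  case/andP => _ /forall_inP no_pred.
  have [// | v_pos] := posnP (along d v); apply/existsP.
  have [u vu] := dpred_exists v_pos.
  by exists u; rewrite /broken vu no_pred ?imset_f.
have := subset_leq_card XY_starts; have := cardsUI X Y; rewrite XY0 cards0; lia.
Qed.

Lemma card_starts d : #|dom_starts d| + #|img_starts d| <= #|dverts d| + 2 * s.
Proof.
have := card_heads_le_tails d; have := card_dom_starts d.
have := card_dverts_ge d; have := card_img_starts_le d; lia.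
Qed.

Lemma tiles_partition : partition (tiles f) (img f).
Proof.
apply: connect_equivalence_partition; apply: sym_connect_sym => p q.
by rewrite /imgadj gridadj_sym andbCA.
Qed.

Lemma tile_sub T : T \in tiles f -> T \subset img f.
Proof.
have /and3P[/eqP <- _ _] := tiles_partition.
exact: bigcup_sup.
Qed.

Lemma tile_closed T p q :
  T \in tiles f -> p \in T -> q \in img f -> gridadj p q -> q \in T.
Proof.
move=> /imsetP[x _ ->]; rewrite !inE => /andP[p_img xp] q_img pq.
by rewrite q_img (connect_trans xp) // connect1 // /imgadj p_img q_img.
Qed.

Lemma sum_card_tiles : \sum_(T in tiles f) #|T| = s * s.
Proof.
by rewrite -(card_partition tiles_partition) card_imset // card_prod card_ord.
Qed.

Definition rows_dom d (T : {set pt n}) := #|[set across d u | u in f @^-1: T]|.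
Definition rows_img d (T : {set pt n}) := #|[set across d p | p in T]|.

Lemma rows_dom_le d T :
  T \in tiles f -> rows_dom d T <= #|dom_starts d :&: f @^-1: T|.
Proof.
move=> tileT; rewrite setIC; apply: card_across_le_starts => u; rewrite !inE.
rewrite negb_or => fuT /andP[u_pos not_head].
have [w uw] : exists w, dsucc d u w by apply: dpred_exists; rewrite lt0n.
have fuw : dsucc d (f u) (f w).
  by apply: contraNT not_head => not_succ; apply/existsP; exists w; rewrite /broken uw.
exists w => //; rewrite inE; apply: (tile_closed tileT fuT); first exact: imset_f.
by rewrite gridadj_sym; apply: dsucc_gridadj fuw.
Qed.

Lemma rows_img_le d T : T \in tiles f -> rows_img d T <= #|img_starts d :&: T|.
Proof.
move=> tileT; rewrite setIC; apply: card_across_le_starts => p pT; rewrite inE (subsetP (tile_sub tileT)) //=.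
case/forall_inPn => q q_img /negbNE pq; exists q => //.
by apply: (tile_closed tileT pT q_img); rewrite gridadj_sym; apply: dsucc_gridadj pq.
Qed.

Lemma sum_rows d :
  \sum_(T in tiles f) (rows_dom d T + rows_img d T) <= #|dverts d| + 2 * s.
Proof.
apply: leq_trans (card_starts d); rewrite big_split /=; apply: leq_add.
  rewrite -(sum_card_preimset_partition (g := f) tiles_partition); last first.
    by move=> u _; apply: imset_f.
  by apply: leq_sum => T; apply: rows_dom_le.
rewrite -(sum_card_preimset_partition (g := id) tiles_partition); last first.
  by move=> p; rewrite inE => /andP[].
apply: leq_sum => T /(rows_img_le d) /leq_trans; apply.
by apply: subset_leq_card; apply/subsetP => p; rewrite !inE.
Qed.

Definition dom_semiperimeter T := rows_dom false T + rows_dom true T.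
Definition img_semiperimeter T :=
  minn (rows_img false T + rows_img true T) (2 * s).

Lemma sum_semiperimeters :
  \sum_(T in tiles f) (dom_semiperimeter T + img_semiperimeter T)
    <= 2 * gamma f + 4 * s.
Proof.
apply: (@leq_trans (\sum_(T in tiles f)
    ((rows_dom false T + rows_img false T) + (rows_dom true T + rows_img true T)))).
  apply: leq_sum => T _; rewrite /dom_semiperimeter /img_semiperimeter.
  have := geq_minl (rows_img false T + rows_img true T) (2 * s); lia.
rewrite big_split /=; apply: leq_trans (leq_add (sum_rows false) (sum_rows true)) _.
have := card_dverts; have := card_Gverts_le_double_gamma; lia.
Qed.

Lemma tile_card_gt0 T : T \in tiles f -> 0 < #|T|.
Proof.
have /and3P[_ _ no0] := tiles_partition.
by move=> tileT; rewrite card_gt0; apply: contraNneq no0 => <-.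
Qed.

Lemma tile_card_le T : T \in tiles f -> #|T| <= s * s.
Proof. by move=> tileT; rewrite -sum_card_tiles (bigD1 T) //= leq_addr. Qed.

Lemma card_tile_preimset T : T \in tiles f -> #|T| = #|f @^-1: T|.
Proof.
move=> tileT; rewrite -(card_imset _ f_inj); apply: eq_card => p.
apply/idP/imsetP => [pT | [u]]; last by rewrite inE => ? ->.
have /imsetP[u _ pu] := subsetP (tile_sub tileT) p pT.
by exists u; rewrite // inE -pu.
Qed.

Lemma dom_semiperimeter_feasible T : T \in tiles f ->
  feasible_semiperimeter s #|T| (dom_semiperimeter T).
Proof.
move=> tileT; have rows_le d : rows_dom d T <= s.
  by apply: leq_trans (max_card _) _; rewrite card_ord.
rewrite /dom_semiperimeter [rows_dom false T + _]addnC card_tile_preimset //.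
have card_rows : #|f @^-1: T| <= rows_dom true T * rows_dom false T.
  exact: card_le_mul_imset_fst_snd.
apply: (feasible_semiperimeter_addn _ card_rows (rows_le _) (rows_le _)).
by rewrite -card_tile_preimset // tile_card_gt0.
Qed.

Lemma img_semiperimeter_feasible T : T \in tiles f ->
  feasible_semiperimeter s #|T| (img_semiperimeter T).
Proof.
move=> tileT; rewrite /img_semiperimeter [rows_img false T + _]addnC.
apply: feasible_semiperimeter_minn (tile_card_gt0 tileT) _ (tile_card_le tileT).
exact: card_le_mul_imset_fst_snd.
Qed.

Lemma sum_tile_bound (F : {set pt n} -> nat) :
  {in tiles f, forall T : {set pt n}, feasible_semiperimeter s #|T| (F T)} ->
  \sum_(T in tiles f) (2 * #|T| + 2 * s) <= \sum_(T in tiles f) F T * (s + 1).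
Proof.
by move=> feasF; apply: leq_sum => T tileT; apply/feasible_semiperimeter_bound/feasF.
Qed.

Lemma sum_tile_bound_two_big (F : {set pt n} -> nat) T1 T2 :
  {in tiles f, forall T : {set pt n}, feasible_semiperimeter s #|T| (F T)} ->
  T1 \in tiles f -> T2 \in tiles f -> T1 != T2 -> 35 < #|T1| -> 35 < #|T2| ->
  \sum_(T in tiles f) (2 * #|T| + 2 * s) + 4 * (s + 1)
    <= \sum_(T in tiles f) F T * (s + 1).
Proof.
move=> feasF T1t T2t T12 big1 big2.
apply: (leq_sum_two T1t T2t T12) => [T tileT | ].
  exact/feasible_semiperimeter_bound/feasF.
apply: feasible_semiperimeter_pair_bound (feasF _ T1t) (feasF _ T2t) big1 big2 _.
have T2t' : (T2 \in tiles f) && (T2 != T1) by rewrite T2t eq_sym.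
by rewrite -sum_card_tiles (bigD1 T1) // (bigD1 T2) //= addnA leq_addr.
Qed.

Lemma gamma_bound_of_tile_bounds c t : #|tiles f| = t.+1 ->
  \sum_(T in tiles f) (2 * #|T| + 2 * s) + c
    <= \sum_(T in tiles f) dom_semiperimeter T * (s + 1) ->
  \sum_(T in tiles f) (2 * #|T| + 2 * s) + c
    <= \sum_(T in tiles f) img_semiperimeter T * (s + 1) ->
  2 * s * t + c <= gamma f * (s + 1).
Proof.
move=> card_tiles le_dom le_img.
have sumE : \sum_(T in tiles f) (2 * #|T| + 2 * s) = 2 * (s * s) + t.+1 * (2 * s).
  by rewrite big_split /= -big_distrr sum_card_tiles sum_nat_const card_tiles.
have le_gamma : \sum_(T in tiles f) dom_semiperimeter T * (s + 1) +
                \sum_(T in tiles f) img_semiperimeter T * (s + 1)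
                  <= (2 * gamma f + 4 * s) * (s + 1).
  by rewrite -!big_distrl -mulnDl -big_split leq_mul2r sum_semiperimeters orbT.
by have := leq_trans (leq_add le_dom le_img) le_gamma; rewrite sumE; lia.
Qed.

Lemma gamma_ge_tiles t : #|tiles f| = t.+1 -> 2 * s * t <= gamma f * (s + 1).
Proof.
move=> card_tiles; rewrite -[2 * s * t]addn0.
apply: gamma_bound_of_tile_bounds card_tiles _ _; rewrite addn0; apply: sum_tile_bound.
  exact: dom_semiperimeter_feasible.
exact: img_semiperimeter_feasible.
Qed.

Lemma gamma_ge_two_big_tiles t T1 T2 : #|tiles f| = t.+1 ->
  T1 \in tiles f -> T2 \in tiles f -> T1 != T2 -> 35 < #|T1| -> 35 < #|T2| ->
  2 * s * t + 4 * (s + 1) <= gamma f * (s + 1).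
Proof.
move=> card_tiles T1t T2t T12 big1 big2.
apply: gamma_bound_of_tile_bounds card_tiles _ _;
  apply: sum_tile_bound_two_big T1t T2t T12 big1 big2.
  exact: dom_semiperimeter_feasible.
exact: img_semiperimeter_feasible.
Qed.

End Tiles.

Theorem lemma4p1 (k n t : nat) (f : dom k -> pt n) :
  1 <= k -> injective f -> 1 <= t -> #|tiles f| = t.+1 ->
  ((t%:R * (2 - 2 / (2 * k + 1)%:R) <= (gamma f)%:R :> rat)%R /\
   ((exists T1 T2, [/\ T1 \in tiles f, T2 \in tiles f, T1 != T2,
                       35 < #|T1| & 35 < #|T2|]) ->
    ((2 * t)%:R * (1 - 1 / (2 * k + 1)%:R) + 4 <= (gamma f)%:R :> rat)%R)).
Proof.
move=> _ f_inj _ card_tiles; have s_pos : 0 < 2 * k + 1 by rewrite addn1.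
split=> [|[T1 [T2 [T1t T2t T12 big1 big2]]]].
  have -> : (t%:R * (2 - 2 / (2 * k + 1)%:R)
             = (2 * t)%:R * (1 - 1 / (2 * k + 1)%:R) + 0%:R :> rat)%R.
    by rewrite natrM; ring.
  apply: nat_le_rat_bound s_pos _; rewrite mul0n addn0.
  exact: gamma_ge_tiles.
apply: nat_le_rat_bound s_pos _.
exact: gamma_ge_two_big_tiles T1t T2t T12 big1 big2.
Qed.
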